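(* Consider the sample versions of the stable CPC-like and stable MPC-like algorithms for LWF chain graphs, in which each conditional independence query ''$u\perp\!\!\!\perp v\mid S$'' is answered by a fixed (possibly erroneous) deterministic rule depending only on $(u,v,S)$, symmetric in $u,v$. Then the decisions about U-structures (which edges are unambiguous and which are oriented as complex arrows in the complex recovery phase) do not depend on the ordering $\mathrm{order}(V)$ of the variables. Moreover, the outputs of the sample versions of the stable CPC-like and stable MPC-like algorithms are entirely independent of $\mathrm{order}(V)$.
   Context: Let $V$ be a finite set of variables. Stable skeleton recovery with ordering $\mathrm{order}(V)$: start with the complete undirected graph $H$ on $V$; for $i=0,\dots,|V|-2$, first store $a_H(x)$ := current adjacency set of each vertex $x$, then while possible select (in an order determined by $\mathrm{order}(V)$) an ordered pair $(u,v)$, still adjacent in $H$, with $u\in a_H(v)$ and $|a_H(u)\setminus\{v\}|\ge i$; if some $S\subseteq a_H(u)\setminus\{v\}$ with $|S|=i$ is judged to satisfy $u\perp\!\!\!\perp v\mid S$, remove $u-v$ from $H$. The sets $a_H$ are not updated within a level. Complex recovery (CPC-like): set $H^*=H$. For each pair $u,v$ non-adjacent in $H$, determine all separating sets, i.e. all $S\subseteq ad_H(u)$ judged to satisfy $u\perp\!\!\!\perp v\mid S$. An edge $u-w$ of $H^*$ is unambiguous if at least one separating set exists and either for every separating set $S$, $u\perp\!\!\!\perp v\mid S\cup\{w\}$ is judged to hold, or for none of them; otherwise it is ambiguous (and marked). An unambiguous $u-w$ is oriented $u\to w$ iff for no separating set $S$ is $u\perp\!\!\!\perp v\mid S\cup\{w\}$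 judged to hold. MPC-like with parameters $0\le\alpha\le\beta\le100$: $u-w$ is unambiguous if at least one separating set exists and the percentage of separating sets $S$ with $u\perp\!\!\!\perp v\mid S\cup\{w\}$ judged to hold is at most $\alpha$ or at least $\beta$; an unambiguous $u-w$ is oriented $u\to w$ iff that percentage is less than $\alpha$. Pattern step: for each pair of arrows $u_1\to w_1$, $u_2\to w_2$ of $H^*$ with $u_1\neq u_2$, label both as complex arrows if there is an undirected path in $H^*$ from $w_1$ to $w_2$ none of whose intermediate vertices is adjacent to $u_1$ or $u_2$; afterwards all unlabeled arrows are made undirected. The output is the resulting graph, with ambiguous edges marked. The stable CPC-like (resp. stable MPC-like) algorithm is stable skeleton recovery followed by CPC-like (resp. MPC-like) complex recovery and the pattern step. *)

From HB Require Import structures.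
From mathcomp Require Import all_boot all_order all_algebra.
Set Implicit Arguments. Unset Strict Implicit. Unset Printing Implicit Defensive.
Import Order.TTheory GRing.Theory Num.Theory.

Section ChainGraphPC.
Variable V : finType.

(* A (judged) conditional-independence oracle: ind u v S  means
   "u _||_ v | S is judged to hold". *)
Definition ci_oracle := V -> V -> {set V} -> bool.

(* Undirected graphs on V are encoded as symmetric sets of ordered pairs:
   u - v is an edge iff (u,v) \in H (and then (v,u) \in H). *)
Definition ugraph := {set V * V}.

Definition adj (H : ugraph) (x : V) : {set V} := [set y | (x, y) \in H].

Definition complete_graph : ugraph := [set e : V * V | e.1 != e.2].

(* The adjacency sets a_H are frozen
   at the beginning of the level (computed from H); the ordered pairs (u,v)
   are visited in the lexicographic order induced by the ordering ord of V;
   the current graph H' is updated as edges are removed. *)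
Definition level_step (ind : ci_oracle) (ord : seq V) (i : nat) (H : ugraph)
  : ugraph :=
  let a := adj H in
  foldl (fun (H' : ugraph) (p : V * V) =>
           let u := p.1 in let v := p.2 in
           if [&& (u, v) \in H', u \in a v, i <= #|a u :\ v| &
                 [exists S : {set V},
                    [&& S \subset a u :\ v, #|S| == i & ind u v S]]]
           then H' :\ (u, v) :\ (v, u) else H')
        H [seq (u, v) | u <- ord, v <- ord].

Definition stable_skeleton (ind : ci_oracle) (ord : seq V) : ugraph :=
  iteri #|V|.-1 (fun i H => level_step ind ord i H) complete_graph.

Definition sepsets (ind : ci_oracle) (H : ugraph) (u v : V) : {set {set V}} :=
  [set S : {set V} | (S \subset adj H u) && ind u v S].

Definition cpc_unamb (ind : ci_oracle) (H : ugraph) (u v w : V) : bool :=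
  let Ss := sepsets ind H u v in
  (Ss != set0) &&
  ([forall S in Ss, ind u v (w |: S)] || [forall S in Ss, ~~ ind u v (w |: S)]).

Definition cpc_orient (ind : ci_oracle) (H : ugraph) (u v w : V) : bool :=
  cpc_unamb ind H u v w &&
  [forall S in sepsets ind H u v, ~~ ind u v (w |: S)].

Definition sep_percentage (ind : ci_oracle) (H : ugraph) (u v w : V) : rat :=
  let Ss := sepsets ind H u v in
  ((100 * #|[set S in Ss | ind u v (w |: S)]|)%:R / #|Ss|%:R)%R.

Definition mpc_unamb (alpha beta : rat) (ind : ci_oracle) (H : ugraph)
  (u v w : V) : bool :=
  (sepsets ind H u v != set0) &&
  ((sep_percentage ind H u v w <= alpha)%R ||
   (beta <= sep_percentage ind H u v w)%R).

Definition mpc_orient (alpha beta : rat) (ind : ci_oracle) (H : ugraph)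
  (u v w : V) : bool :=
  mpc_unamb alpha beta ind H u v w && (sep_percentage ind H u v w < alpha)%R.

(* The pair (u,w) is in [ambiguous_marks] iff the edge u - w of H is ambiguous
   with respect to some pair u, v non-adjacent in H; it is in [recovered_arrows]
   iff u - w is oriented u -> w with respect to some such pair u, v. *)
Definition nonadj_pair (H : ugraph) (u v : V) : bool := (u != v) && ((u, v) \notin H).

Definition ambiguous_marks (unamb : ugraph -> V -> V -> V -> bool) (H : ugraph)
  : {set V * V} :=
  [set e : V * V | (e \in H) &&
     [exists v, nonadj_pair H e.1 v && ~~ unamb H e.1 v e.2]].

Definition recovered_arrows (orient : ugraph -> V -> V -> V -> bool) (H : ugraph)
  : {set V * V} :=
  [set e : V * V | (e \in H) &&
     [exists v, nonadj_pair H e.1 v && orient H e.1 v e.2]].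

Definition undirected_rel (H : ugraph) (A : {set V * V}) : rel V :=
  fun x y => [&& (x, y) \in H, (x, y) \notin A & (y, x) \notin A].

(* There is an undirected path in H* from w1 to w2 none of whose intermediate
   vertices satisfies ~~ ok: the path has length 0, length 1, or is
   w1 - x - ... - y - w2 with all of x, ..., y ok. *)
Definition upath (R : rel V) (ok : pred V) (w1 w2 : V) : bool :=
  [|| w1 == w2, R w1 w2 |
     [exists x, exists y,
        [&& ok x, ok y, R w1 x, R y w2 &
            connect (fun a b => [&& R a b, ok a & ok b]) x y]]].

Definition complex_pair (H : ugraph) (A : {set V * V}) (a1 a2 : V * V) : bool :=
  [&& a1 \in A, a2 \in A, a1.1 != a2.1 &
      upath (undirected_rel H A)
            (fun x => (x \notin adj H a1.1) && (x \notin adj H a2.1)) a1.2 a2.2].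

Definition complex_arrows (H : ugraph) (A : {set V * V}) : {set V * V} :=
  [set a : V * V | [exists b : V * V, complex_pair H A a b || complex_pair H A b a]].

(* Output: the skeleton, the complex arrows (all other edges undirected),
   and the ambiguity marks. *)
Definition output (unamb orient : ugraph -> V -> V -> V -> bool) (H : ugraph)
  : ugraph * {set V * V} * {set V * V} :=
  (H, complex_arrows H (recovered_arrows orient H), ambiguous_marks unamb H).

Definition stable_cpc (ind : ci_oracle) (ord : seq V) :=
  output (cpc_unamb ind) (cpc_orient ind) (stable_skeleton ind ord).

Definition stable_mpc (alpha beta : rat) (ind : ci_oracle) (ord : seq V) :=
  output (mpc_unamb alpha beta ind) (mpc_orient alpha beta ind)
         (stable_skeleton ind ord).

End ChainGraphPC.

From HB Require Import structures.
From mathcomp Require Import all_boot all_order all_algebra.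
Import Order.TTheory GRing.Theory Num.Theory.

Set Implicit Arguments.

(* Within a level of stable skeleton recovery the removal test reads only the
   adjacency sets frozen at the start of the level, never the graph being
   edited.  Hence a level removes exactly the edges u - v of H for which the
   test holds at (u, v) or (v, u), whatever the order of the visits, and the
   skeleton depends on order(V) only through its set of elements.  All later
   phases are functions of the skeleton alone. *)

Section ConditionalEdgeRemoval.
Variables (T : finType) (C : rel T).

Definition remove_edge_if (H : {set T * T}) (p : T * T) : {set T * T} :=
  if ((p.1, p.2) \in H) && C p.1 p.2 then H :\ (p.1, p.2) :\ (p.2, p.1) else H.

Definition removed_edges (H : {set T * T}) (s : seq (T * T)) : {set T * T} :=
  [set p | has (fun q => [&& q \in H, C q.1 q.2 & (p == q) || (p == (q.2, q.1))]) s].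

Lemma removed_edges_sym H s x y :
  (x, y) \in removed_edges H s -> (y, x) \in removed_edges H s.
Proof.
rewrite !inE => /hasP [[a b] qs /and3P [qH Cq eq_q]].
apply/hasP; exists (a, b); rewrite //= qH Cq.
by case/orP: eq_q => /eqP [-> ->]; rewrite eqxx ?orbT.
Qed.

Lemma removed_edges_rcons H s q :
  removed_edges H (rcons s q) =
  (if (q \in H) && C q.1 q.2 then [set q; (q.2, q.1)] else set0)
    :|: removed_edges H s.
Proof.
apply/setP => p; rewrite !inE has_rcons.
by case: (q \in H); case: (C q.1 q.2); rewrite /= ?inE.
Qed.

Lemma foldl_remove_edge_if H s :
  foldl remove_edge_if H s = H :\: removed_edges H s.
Proof.
elim/last_ind: s => [|s [x y] IH].
  by apply/setP => p; rewrite !inE.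
rewrite foldl_rcons IH removed_edges_rcons /remove_edge_if /=.
set R := removed_edges H s.
have [Rxy | nRxy] := boolP ((x, y) \in R).
  have Ryx : (y, x) \in R := removed_edges_sym Rxy.
  have -> : ((x, y) \in H :\: R) = false by rewrite inE Rxy.
  case: ifP => _; last by rewrite set0U.
  by congr (_ :\: _); apply/esym/setUidPr; rewrite subUset !sub1set Rxy Ryx.
have -> : ((x, y) \in H :\: R) = ((x, y) \in H) by rewrite inE nRxy.
case: ifP => _; last by rewrite set0U.
by rewrite setUC -!setDDl.
Qed.

Lemma foldl_remove_edge_if_eq_mem H s1 s2 :
  s1 =i s2 -> foldl remove_edge_if H s1 = foldl remove_edge_if H s2.
Proof.
move=> eq_s; rewrite !foldl_remove_edge_if; congr (_ :\: _).
by apply/setP => p; rewrite !inE (eq_has_r eq_s).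
Qed.

End ConditionalEdgeRemoval.

Section StableSkeleton.
Variables (V : finType) (ind : ci_oracle V).

Definition level_test (i : nat) (H : ugraph V) : rel V :=
  fun u v => [&& u \in adj H v, i <= #|adj H u :\ v| &
     [exists S : {set V}, [&& S \subset adj H u :\ v, #|S| == i & ind u v S]]].

Lemma level_stepE ord i H :
  level_step ind ord i H =
  foldl (remove_edge_if (level_test i H)) H [seq (u, v) | u <- ord, v <- ord].
Proof. by []. Qed.

Lemma level_step_eq_mem ord1 ord2 i H :
  ord1 =i ord2 -> level_step ind ord1 i H = level_step ind ord2 i H.
Proof.
move=> eq_ord; rewrite !level_stepE.
by apply: foldl_remove_edge_if_eq_mem; apply: mem_allpairs.
Qed.

Lemma stable_skeleton_eq_mem ord1 ord2 :
  ord1 =i ord2 -> stable_skeleton ind ord1 = stable_skeleton ind ord2.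
Proof.
move=> eq_ord; rewrite /stable_skeleton; elim: #|V|.-1 => [|n IH] //=.
by rewrite IH; apply: level_step_eq_mem.
Qed.

End StableSkeleton.

Theorem theorem4 (V : finType) (ind : ci_oracle V)
  (ind_sym : forall (u v : V) (S : {set V}), ind u v S = ind v u S)
  (ord1 ord2 : seq V)
  (hord1 : perm_eq ord1 (enum V)) (hord2 : perm_eq ord2 (enum V)) :
  let H1 := stable_skeleton ind ord1 in
  let H2 := stable_skeleton ind ord2 in
  (* CPC-like: U-structure decisions and output are order independent *)
  [/\ ambiguous_marks (cpc_unamb ind) H1 = ambiguous_marks (cpc_unamb ind) H2,
      recovered_arrows (cpc_orient ind) H1 = recovered_arrows (cpc_orient ind) H2,
      complex_arrows H1 (recovered_arrows (cpc_orient ind) H1)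
        = complex_arrows H2 (recovered_arrows (cpc_orient ind) H2)
    & stable_cpc ind ord1 = stable_cpc ind ord2] /\
  (* MPC-like, for all admissible parameters *)
  (forall alpha beta : rat, (0 <= alpha)%R -> (alpha <= beta)%R -> (beta <= 100)%R ->
  [/\ ambiguous_marks (mpc_unamb alpha beta ind) H1
        = ambiguous_marks (mpc_unamb alpha beta ind) H2,
      recovered_arrows (mpc_orient alpha beta ind) H1
        = recovered_arrows (mpc_orient alpha beta ind) H2,
      complex_arrows H1 (recovered_arrows (mpc_orient alpha beta ind) H1)
        = complex_arrows H2 (recovered_arrows (mpc_orient alpha beta ind) H2)
    & stable_mpc alpha beta ind ord1 = stable_mpc alpha beta ind ord2]).
Proof.
move=> H1 H2.
have eq_ord : ord1 =i ord2 by move=> x; rewrite (perm_mem hord1) (perm_mem hord2).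
have eq_H : H1 = H2 by exact: stable_skeleton_eq_mem.
rewrite /stable_cpc /stable_mpc -/H1 -/H2 eq_H.
by split=> // alpha beta _ _ _.
Qed.
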